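(* $\Omega(\eta)$ is equimorphic, as a join-semilattice, to every member of $\mathcal{L_D}$.
   Context: $\Omega(\eta)$ denotes the join-subsemilattice of the direct product $\mathbb{N}\times D$ (componentwise order), where $\mathbb{N}$ is the chain of non-negative integers and $D$ is the chain of dyadic rationals in $[0,1)$, consisting of the pairs $(n,r)$ with $2^n r\in\mathbb{Z}$. A bichain is a triple $B=(X,\leq_1,\leq_2)$ with $\leq_1,\leq_2$ linear orders on a set $X$; $C(B)$ denotes the closure system on $X$ whose closed sets are the sets $I_1\cap I_2$ with $I_k$ an initial segment of $(X,\leq_k)$, ordered by inclusion (an algebraic lattice), and $K(C(B))$ is the join-semilattice of its compact elements (the closures of finite subsets of $X$). $\mathcal{L_D}$ is the class of join-semilattices isomorphic to $K(C(B))$ for some bichain $B$ whose first component $(X,\leq_1)$ has order type $\omega$ and whose second component $(X,\leq_2)$ is not order-scattered (contains a copy of $\mathbb{Q}$). Two join-semilattices are equimorphic as join-semilattices if each embeds into the other by a one-to-one join-preserving map. *)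

From Stdlib Require List.
From mathcomp Require Import all_boot all_order all_algebra.
Set Implicit Arguments. Unset Strict Implicit. Unset Printing Implicit Defensive.
Import Order.TTheory GRing.Theory Num.Theory.

Definition is_join (T : Type) (le : T -> T -> Prop) (a b c : T) : Prop :=
  le a c /\ le b c /\ (forall d, le a d -> le b d -> le c d).

Definition join_embedding (T U : Type) (leT : T -> T -> Prop)
    (leU : U -> U -> Prop) (f : T -> U) : Prop :=
  (forall x y, f x = f y -> x = y) /\
  (forall a b c, is_join leT a b c -> is_join leU (f a) (f b) (f c)).

Definition join_equimorphic (T U : Type) (leT : T -> T -> Prop)
    (leU : U -> U -> Prop) : Prop :=
  (exists f : T -> U, join_embedding leT leU f) /\
  (exists g : U -> T, join_embedding leU leT g).

Definition linear_order (X : Type) (le : X -> X -> Prop) : Prop :=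
  (forall x, le x x) /\
  (forall x y, le x y -> le y x -> x = y) /\
  (forall x y z, le x y -> le y z -> le x z) /\
  (forall x y, le x y \/ le y x).

Definition order_type_omega (X : Type) (le : X -> X -> Prop) : Prop :=
  exists f : nat -> X,
    (forall x : X, exists n, f n = x) /\
    (forall m n : nat, le (f m) (f n) <-> (m <= n)%N).

(* (X, le) is not order-scattered: it contains a copy of the rationals *)
Definition contains_copy_of_Q (X : Type) (le : X -> X -> Prop) : Prop :=
  exists g : rat -> X,
    forall p q : rat, le (g p) (g q) <-> (p <= q)%R.

Definition omega_mem (p : nat * rat) : Prop :=
  (0 <= p.2)%R /\ (p.2 < 1)%R /\
  exists z : int, ((2%:R ^+ p.1) * p.2 = z%:~R)%R.

Definition Omega_eta : Type := {p : nat * rat | omega_mem p}.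

Definition Omega_le (p q : Omega_eta) : Prop :=
  ((proj1_sig p).1 <= (proj1_sig q).1)%N /\
  ((proj1_sig p).2 <= (proj1_sig q).2)%R.

Definition initial_segment (X : Type) (le : X -> X -> Prop) (I : X -> Prop)
  : Prop := forall x y, le y x -> I x -> I y.

Definition bichain_closed (X : Type) (le1 le2 : X -> X -> Prop)
    (S : X -> Prop) : Prop :=
  exists I1 I2 : X -> Prop,
    initial_segment le1 I1 /\ initial_segment le2 I2 /\
    S = (fun x => I1 x /\ I2 x).

Definition bichain_closure (X : Type) (le1 le2 : X -> X -> Prop)
    (A : X -> Prop) : X -> Prop :=
  fun x => forall S, bichain_closed le1 le2 S ->
             (forall y, A y -> S y) -> S x.

Definition bichain_compact (X : Type) (le1 le2 : X -> X -> Prop)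
    (S : X -> Prop) : Prop :=
  exists l : seq X, S = bichain_closure le1 le2 (fun y => List.In y l).

Definition KCB (X : Type) (le1 le2 : X -> X -> Prop) : Type :=
  {S : X -> Prop | bichain_compact le1 le2 S}.

Definition KCB_le (X : Type) (le1 le2 : X -> X -> Prop)
    (S T : KCB le1 le2) : Prop :=
  forall x, proj1_sig S x -> proj1_sig T x.

(* Compact elements of C(B) are the empty set and the boxes
   [{x | x <=1 a /\ x <=2 b}] with [b <=1 a] and [a <=2 b]; the join of two
   boxes is the box whose corners are the maxima of the corners, just as joins
   in Omega(eta) are coordinatewise maxima.  Enumerate [X] along [<=1] as
   [x_0, x_1, ...].  A box is sent to [(i + 1, c(b))] where [a = x_i] and
   [c(x_k) = sum_(j <= k, x_j <=2 x_k) 2^-(j+1)]: each binary digit outweighs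
   all later ones, so [c] is an order embedding of [<=2], and [c(b)] has level
   at most [k + 1 <= i + 1] for [b = x_k].  Conversely [(n, r)] is sent to the
   box with corners [a_n] and [q_r], where [q] is the copy of Q in [<=2]; the
   [a_n] are chosen [<=1]-increasing, [<=2]-below [q_0] and [<=1]-above every
   [q_r] of level [n], which is possible because the [q_(-t)] have unbounded
   [<=1]-rank. *)

From mathcomp Require Import all_boot all_order all_algebra.
From mathcomp Require Import lra.
From Stdlib Require Import ClassicalEpsilon FunctionalExtensionality.
From Stdlib Require Import PropExtensionality ProofIrrelevance.
Set Implicit Arguments. Unset Strict Implicit. Unset Printing Implicit Defensive.
Import Order.TTheory GRing.Theory Num.Theory.
Local Open Scope ring_scope.

Section Joins.
Variables (T : Type) (le : T -> T -> Prop).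

Lemma is_join_max a b c : le a c -> le b c -> c = a \/ c = b -> is_join le a b c.
Proof. by move=> ac bc [E|E]; subst c; do !split=> //. Qed.

Lemma is_joinC a b c : is_join le a b c -> is_join le b a c.
Proof. by move=> [ac [bc c_min]]; split=> //; split=> // d bd ad; apply: c_min. Qed.

Lemma join_unique a b c c' :
  is_join le a b c -> is_join le a b c' -> le c c' /\ le c' c.
Proof.
by move=> [ac [bc c_min]] [ac' [bc' c'_min]]; split; [apply: c_min | apply: c'_min].
Qed.

Lemma homo_max_join d (U : orderType d) (f : U -> T) :
  {homo f : x y / (x <= y)%O >-> le x y} ->
  forall x y, is_join le (f x) (f y) (f (Order.max x y)).
Proof.
move=> f_homo x y; apply: is_join_max.
- by apply: f_homo; rewrite le_max lexx.
- by apply: f_homo; rewrite le_max lexx orbT.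
- by case: (leP x y) => _; [right | left].
Qed.

Section Linear.
Hypothesis L : linear_order le.

Lemma lin_refl x : le x x. Proof. by case: L. Qed.

Lemma lin_anti x y : le x y -> le y x -> x = y.
Proof. by case: L => _ [anti _]; apply: anti. Qed.

Lemma lin_trans x y z : le x y -> le y z -> le x z.
Proof. by case: L => _ [_ [trans _]]; apply: trans. Qed.

Lemma lin_total x y : le x y \/ le y x.
Proof. by case: L => _ [_ [_ total]]. Qed.

Lemma linear_join_exists a b : exists c, is_join le a b c.
Proof.
have [ab|ba] := lin_total a b.
- by exists b; apply: is_join_max => //; [apply: lin_refl | right].
- by exists a; apply: is_join_max => //; [apply: lin_refl | left].
Qed.

Lemma linear_join_cases a b c : is_join le a b c -> c = a \/ c = b.
Proof.
move=> [ac [bc c_min]]; have [ab|ba] := lin_total a b.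
- by right; apply: lin_anti bc; apply: c_min => //; apply: lin_refl.
- by left; apply: lin_anti ac; apply: c_min => //; apply: lin_refl.
Qed.

Lemma homo_join_max d (U : orderType d) (f : T -> U) :
  {homo f : x y / le x y >-> (x <= y)%O} ->
  forall a b c, is_join le a b c -> f c = Order.max (f a) (f b).
Proof.
move=> f_homo a b c abc; have [ac [bc _]] := abc.
have [E|E] := linear_join_cases abc; subst c.
- by rewrite max_l // f_homo.
- by rewrite max_r // f_homo.
Qed.

Lemma list_max (l : seq T) :
  l <> [::] -> exists2 a, List.In a l & forall y, List.In y l -> le y a.
Proof.
elim: l => [//|c [|c' l] IH _].
  by exists c => [|y [<-|[]]]; [left | apply: lin_refl].
have [|a a_in a_max] := IH; first by [].
have [ca|ac] := lin_total c a.
- by exists a => [|y [<-|y_in]]; [right | | apply: a_max].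
- exists c => [|y [<-|y_in]]; [by left | exact: lin_refl |].
  exact: lin_trans (a_max _ y_in) ac.
Qed.

End Linear.
End Joins.

Lemma inj_nat_unbounded (h : nat -> nat) :
  injective h -> forall N, exists t, (N <= h t)%N.
Proof.
move=> h_inj N; have : ~~ [forall t : 'I_N.+1, h t < N]%N.
  apply/forallP => h_small.
  have F_inj : injective (fun t : 'I_N.+1 => Ordinal (h_small t) : 'I_N).
    by move=> s t /(congr1 val) /h_inj /val_inj.
  by have := leq_card _ F_inj; rewrite !card_ord ltnn.
by case/forallPn => t; rewrite -leqNgt; exists t.
Qed.

Lemma Omega_eta_ext (p q : Omega_eta) : proj1_sig p = proj1_sig q -> p = q.
Proof.
case: p q => [p p_mem] [q q_mem] /= E; subst q.
by congr exist; apply: proof_irrelevance.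
Qed.

Lemma omega_memP n (r : rat) :
  omega_mem (n, r) <-> [/\ 0 <= r, r < 1 & 2%:R ^+ n * r \is a Num.int].
Proof.
rewrite /omega_mem /=; split => [[r_ge0 [r_lt1 /intrP r_int]] | [r_ge0 r_lt1 /intrP r_int]].
- by split.
- by do !split.
Qed.

Lemma omega_mem_widen n m (r : rat) :
  (n <= m)%N -> omega_mem (n, r) -> omega_mem (m, r).
Proof.
move=> le_nm /omega_memP [r_ge0 r_lt1 r_int]; apply/omega_memP; split => //.
rewrite -(subnK le_nm) exprD -mulrA rpredM //.
by rewrite -natrX natr_int.
Qed.

Definition pair_max (p q : nat * rat) : nat * rat := (maxn p.1 q.1, Num.max p.2 q.2).

Lemma pair_maxC p q : pair_max p q = pair_max q p.
Proof. by rewrite /pair_max maxnC maxC. Qed.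

Lemma pair_max0 q : 0 <= q.2 -> pair_max (0%N, 0) q = q.
Proof. by case: q => n r /= r_ge0; rewrite /pair_max /= max0n max_r. Qed.

Lemma omega_mem_max p q : omega_mem p -> omega_mem q -> omega_mem (pair_max p q).
Proof.
case: p q => [n r] [m s] p_mem q_mem; rewrite /pair_max /=.
case: (leP r s) => _.
- by apply: omega_mem_widen q_mem; apply: leq_maxr.
- by apply: omega_mem_widen p_mem; apply: leq_maxl.
Qed.

Lemma Omega_joinP (p1 p2 p3 : Omega_eta) :
  is_join Omega_le p1 p2 p3 <->
  proj1_sig p3 = pair_max (proj1_sig p1) (proj1_sig p2).
Proof.
case: p1 p2 p3 => [[n1 r1] mem1] [[n2 r2] mem2] [[n3 r3] mem3].
have [r1_le r2_le] : r1 <= Num.max r1 r2 /\ r2 <= Num.max r1 r2.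
  by rewrite !le_max !lexx orbT.
rewrite /is_join /Omega_le /pair_max /=.
split => [[[n13 r13] [[n23 r23] p3_min]] | [-> ->]].
- have [/= n3_le r3_le] := p3_min (exist _ _ (omega_mem_max mem1 mem2))
    (conj (leq_maxl _ _) r1_le) (conj (leq_maxr _ _) r2_le).
  congr pair; apply/eqP.
  + by rewrite eqn_leq n3_le geq_max n13 n23.
  + by rewrite eq_le r3_le ge_max r13 r23.
- rewrite leq_maxl leq_maxr; split; [by [] | split; [by [] |]].
  move=> [[n r] ?] /= [n1_n r1_r] [n2_n r2_r].
  by rewrite geq_max ge_max n1_n n2_n r1_r r2_r.
Qed.

Section DyadicCode.
Variable prec : rel nat.
Hypotheses (prec_refl : reflexive prec) (prec_trans : transitive prec)
  (prec_anti : antisymmetric prec) (prec_total : total prec).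

Definition dyadic_weight (j : nat) : rat := (2%:R ^+ j.+1)^-1.
Local Notation w := dyadic_weight.

Lemma dyadic_weight_gt0 j : 0 < w j.
Proof. by rewrite invr_gt0 exprn_gt0. Qed.

Lemma dyadic_weightS j : w j = 2%:R * w j.+1.
Proof. by rewrite /dyadic_weight [in RHS]exprS invfM mulrA mulfV ?mul1r. Qed.

Lemma sum_dyadic_weight m n :
  (m <= n)%N -> \sum_(m <= j < n) w j = 2%:R * w m - 2%:R * w n.
Proof.
move=> /subnK <-; elim: (n - m)%N => [|d IH]; first by rewrite big_geq ?subrr.
rewrite addSn big_nat_recr ?leq_addl //= IH (dyadic_weightS (d + m)); lra.
Qed.

Lemma ler_sum_dyadic_weight m n (P Q : pred nat) :
  (forall j, P j -> Q j) ->
  \sum_(m <= j < n | P j) w j <= \sum_(m <= j < n | Q j) w j.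
Proof.
move=> PQ; rewrite [leLHS]big_mkcond [leRHS]big_mkcond ler_sum // => j _.
case: ifP => [/PQ -> // | _]; case: ifP => // _.
exact: ltW (dyadic_weight_gt0 j).
Qed.

Definition dyadic_code (k : nat) : rat := \sum_(0 <= j < k.+1 | prec j k) w j.

Lemma dyadic_codeE k : dyadic_code k = \sum_(0 <= j < k | prec j k) w j + w k.
Proof. by rewrite /dyadic_code big_mkcond big_nat_recr //= prec_refl -big_mkcond. Qed.

Lemma dyadic_code_ge0 k : 0 <= dyadic_code k.
Proof. by apply: sumr_ge0 => j _; apply: ltW (dyadic_weight_gt0 j). Qed.

Lemma dyadic_code_lt1 k : dyadic_code k < 1.
Proof.
have code_le : dyadic_code k <= \sum_(0 <= j < k.+1) w j.
  by apply: ler_sum_dyadic_weight.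
have w0 : 2%:R * w 0 = 1 by rewrite /dyadic_weight expr1 mulfV.
move: code_le; rewrite sum_dyadic_weight // w0.
have := dyadic_weight_gt0 k.+1; lra.
Qed.

Lemma dyadic_code_lt k k' : prec k k' -> k != k' -> dyadic_code k < dyadic_code k'.
Proof.
move=> kk' /negPf neq_kk'.
have [lt_kk'|lt_k'k|eq_kk'] := ltngtP k k'; last by rewrite eq_kk' eqxx in neq_kk'.
- have below : \sum_(0 <= j < k | prec j k) w j
               <= \sum_(0 <= j < k | prec j k') w j.
    by apply: ler_sum_dyadic_weight => j jk; apply: prec_trans kk'.
  have between : 0 <= \sum_(k.+1 <= j < k' | prec j k') w j.
    by apply: sumr_ge0 => j _; apply: ltW (dyadic_weight_gt0 j).
  rewrite !dyadic_codeE (big_cat_nat (leq0n k) (ltnW lt_kk')) /=.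
  rewrite (big_ltn_cond lt_kk') kk'.
  have := dyadic_weight_gt0 k'; lra.
- have k'k : ~~ prec k' k.
    by apply: contraFN neq_kk' => k'k; apply/eqP/prec_anti; rewrite kk'.
  have below : \sum_(0 <= j < k' | prec j k) w j
               <= \sum_(0 <= j < k' | prec j k') w j.
    by apply: ler_sum_dyadic_weight => j jk; apply: prec_trans kk'.
  have between : \sum_(k'.+1 <= j < k | prec j k) w j <= \sum_(k'.+1 <= j < k) w j.
    by apply: ler_sum_dyadic_weight.
  move: between; rewrite sum_dyadic_weight // -dyadic_weightS => between.
  rewrite !dyadic_codeE (big_cat_nat (leq0n k') (ltnW lt_k'k)) /=.
  rewrite (big_ltn_cond lt_k'k) (negPf k'k).
  have := dyadic_weight_gt0 k; lra.
Qed.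

Lemma ler_dyadic_code k k' : (dyadic_code k <= dyadic_code k') = prec k k'.
Proof.
have [<-|neq_kk'] := eqVneq k k'; first by rewrite lexx prec_refl.
case kk': (prec k k'); first by rewrite ltW // dyadic_code_lt.
have k'k : prec k' k by move: (prec_total k k'); rewrite kk'.
by apply/negbTE; rewrite -ltNge dyadic_code_lt // eq_sym.
Qed.

Lemma omega_mem_dyadic_code n k : (k < n)%N -> omega_mem (n, dyadic_code k).
Proof.
move=> lt_kn; apply/omega_memP; split; [exact: dyadic_code_ge0 | exact: dyadic_code_lt1 |].
rewrite /dyadic_code big_nat_cond mulr_sumr rpred_sum // => j /andP [/andP [_ le_jk] _].
have /subnK <- : (j.+1 <= n)%N by rewrite ltnS in le_jk; exact: leq_ltn_trans le_jk lt_kn.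
by rewrite exprD mulfK ?expf_neq0 // -natrX natr_int.
Qed.

End DyadicCode.

Section Bichain.
Variables (X : Type) (le1 le2 : X -> X -> Prop).
Hypotheses (L1 : linear_order le1) (L2 : linear_order le2).

Local Notation closure := (bichain_closure le1 le2).
Local Notation K := (KCB le1 le2).

Definition box (a b : X) : X -> Prop := fun x => le1 x a /\ le2 x b.

(* [a] and [b] both lie in [box a b], which is then the closure of [{a, b}]. *)
Definition corner_pair (a b : X) : Prop := le2 a b /\ le1 b a.

Lemma box_closed a b : bichain_closed le1 le2 (box a b).
Proof.
exists (fun x => le1 x a), (fun x => le2 x b); split; last split => //.
- by move=> x y yx xa; exact: (lin_trans L1 yx xa).
- by move=> x y yx xb; exact: (lin_trans L2 yx xb).
Qed.

Lemma subset_closure (A : X -> Prop) x : A x -> closure A x.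
Proof. by move=> Ax S _; apply. Qed.

Lemma box_sub_closure (A : X -> Prop) a b :
  closure A a -> closure A b -> forall x, box a b x -> closure A x.
Proof.
move=> Aa Ab x [xa xb] S [I1 [I2 [I1_init [I2_init ->]]]] AS.
have S_closed : bichain_closed le1 le2 (fun x => I1 x /\ I2 x) by exists I1, I2.
split; [apply: I1_init xa _; exact: (Aa _ S_closed AS).1
       | apply: I2_init xb _; exact: (Ab _ S_closed AS).2].
Qed.

Lemma closure_list_box (l : seq X) a b :
  List.In a l -> List.In b l -> (forall y, List.In y l -> box a b y) ->
  closure (fun y => List.In y l) = box a b.
Proof.
move=> a_in b_in l_box; apply: functional_extensionality => x.
apply: propositional_extensionality; split => [x_cl | ].
- exact: x_cl (box_closed a b) l_box.
- by apply: box_sub_closure; apply: subset_closure.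
Qed.

Lemma box_compact a b : corner_pair a b -> bichain_compact le1 le2 (box a b).
Proof.
move=> [ab ba]; exists [:: a; b]; apply/esym/closure_list_box; [by left | by right; left |].
move=> y [<- | [<- | []]]; split => //; [exact: (lin_refl L1) | exact: (lin_refl L2)].
Qed.

Definition Kbox a b (ab : corner_pair a b) : K := exist _ (box a b) (box_compact ab).

Lemma KCB_le_anti (S T : K) : KCB_le S T -> KCB_le T S -> S = T.
Proof.
case: S T => [S S_cpt] [T T_cpt] /= ST TS.
have E : S = T.
  apply: functional_extensionality => x.
  by apply: propositional_extensionality; split; [apply: ST | apply: TS].
by subst T; congr exist; apply: proof_irrelevance.
Qed.

Lemma KCB_cases (T : K) :
  (forall x, ~ proj1_sig T x) \/ exists a b (ab : corner_pair a b), T = Kbox ab.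
Proof.
case: T => T T_cpt; have [[|c l] T_cl] := T_cpt.
  left => x; rewrite /= T_cl => x_cl.
  have empty_closed : bichain_closed le1 le2 (fun _ => False /\ True).
    by exists (fun _ => False), (fun _ => True); split; [move=> ? ? _ [] | split].
  by case: (x_cl _ empty_closed (fun y (y_in : List.In y [::]) => match y_in with end)).
right; have [|a a_in a_max] := list_max L1 (l := c :: l) => //.
have [|b b_in b_max] := list_max L2 (l := c :: l) => //.
have ab : corner_pair a b by split; [apply: b_max | apply: a_max].
have l_box y : List.In y (c :: l) -> box a b y by split; [apply: a_max | apply: b_max].
exists a, b, ab; apply: KCB_le_anti => x.
all: by rewrite /= T_cl (closure_list_box a_in b_in l_box).
Qed.

Lemma box_inj a b a' b' :
  corner_pair a b -> corner_pair a' b' -> box a b = box a' b' -> a = a' /\ b = b'.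
Proof.
move=> [ab ba] [ab' ba'] E.
have [aa' _] : box a' b' a by rewrite -E; split => //; apply: (lin_refl L1).
have [_ bb'] : box a' b' b by rewrite -E; split => //; apply: (lin_refl L2).
have [a'a _] : box a b a' by rewrite E; split => //; apply: (lin_refl L1).
have [_ b'b] : box a b b' by rewrite E; split => //; apply: (lin_refl L2).
by split; [apply: (lin_anti L1) | apply: (lin_anti L2)].
Qed.

Lemma corner_pair_join a1 b1 a2 b2 a3 b3 :
  corner_pair a1 b1 -> corner_pair a2 b2 ->
  is_join le1 a1 a2 a3 -> is_join le2 b1 b2 b3 -> corner_pair a3 b3.
Proof.
move=> [ab1 ba1] [ab2 ba2] a3_join b3_join.
have [b13 [b23 _]] := b3_join; have [a13 [a23 _]] := a3_join.
split.
- case: (linear_join_cases L1 a3_join) => ->.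
  + exact: (lin_trans L2 ab1 b13).
  + exact: (lin_trans L2 ab2 b23).
- case: (linear_join_cases L2 b3_join) => ->.
  + exact: (lin_trans L1 ba1 a13).
  + exact: (lin_trans L1 ba2 a23).
Qed.

Lemma Kbox_join a1 b1 a2 b2 a3 b3
    (ab1 : corner_pair a1 b1) (ab2 : corner_pair a2 b2) (ab3 : corner_pair a3 b3) :
  is_join le1 a1 a2 a3 -> is_join le2 b1 b2 b3 ->
  is_join (@KCB_le X le1 le2) (Kbox ab1) (Kbox ab2) (Kbox ab3).
Proof.
move=> a3_join b3_join; have [a13 [a23 _]] := a3_join; have [b13 [b23 _]] := b3_join.
rewrite /KCB_le /=; split; last split.
- by move=> x [xa xb]; split; [apply: (lin_trans L1 xa a13) | apply: (lin_trans L2 xb b13)].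
- by move=> x [xa xb]; split; [apply: (lin_trans L1 xa a23) | apply: (lin_trans L2 xb b23)].
case=> T [l T_cl] /= box1_T box2_T; rewrite T_cl in box1_T box2_T *; apply: box_sub_closure.
- case: (linear_join_cases L1 a3_join) => ->.
  + exact: box1_T (conj (lin_refl L1 a1) ab1.1).
  + exact: box2_T (conj (lin_refl L1 a2) ab2.1).
- case: (linear_join_cases L2 b3_join) => ->.
  + exact: box1_T (conj ab1.2 (lin_refl L2 b1)).
  + exact: box2_T (conj ab2.2 (lin_refl L2 b2)).
Qed.

Variable f1 : nat -> X.
Hypotheses (f1_surj : forall x, exists n, f1 n = x)
  (f1_ord : forall m n, le1 (f1 m) (f1 n) <-> (m <= n)%N).
Variable g : rat -> X.
Hypothesis g_ord : forall p q, le2 (g p) (g q) <-> p <= q.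

Definition pos (x : X) : nat :=
  proj1_sig (constructive_indefinite_description _ (f1_surj x)).

Lemma f1K : cancel pos f1.
Proof. by move=> x; apply: proj2_sig (constructive_indefinite_description _ (f1_surj x)). Qed.

Lemma f1_inj : injective f1.
Proof.
move=> m n E; apply/eqP; rewrite eqn_leq.
by apply/andP; split; apply/f1_ord; rewrite E; apply: (lin_refl L1).
Qed.

Lemma posK : cancel f1 pos.
Proof. by move=> n; apply: f1_inj; rewrite f1K. Qed.

Lemma pos_le x y : le1 x y <-> (pos x <= pos y)%N.
Proof. by rewrite -f1_ord !f1K. Qed.

Lemma g_inj : injective g.
Proof.
move=> p q E; apply/eqP; rewrite eq_le.
by apply/andP; split; apply/g_ord; rewrite E; apply: (lin_refl L2).
Qed.

Definition prec2 (j k : nat) : bool :=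
  if excluded_middle_informative (le2 (f1 j) (f1 k)) then true else false.

Lemma prec2P j k : reflect (le2 (f1 j) (f1 k)) (prec2 j k).
Proof. by rewrite /prec2; case: excluded_middle_informative => jk; constructor. Qed.

Lemma prec2_refl : reflexive prec2.
Proof. by move=> j; apply/prec2P; apply: (lin_refl L2). Qed.

Lemma prec2_trans : transitive prec2.
Proof. by move=> j i k /prec2P ij /prec2P jk; apply/prec2P; apply: (lin_trans L2 ij jk). Qed.

Lemma prec2_anti : antisymmetric prec2.
Proof.
by move=> j k /andP [/prec2P jk /prec2P kj]; apply: f1_inj; apply: (lin_anti L2 jk kj).
Qed.

Lemma prec2_total : total prec2.
Proof.
by move=> j k; case: (lin_total L2 (f1 j) (f1 k)) => [/prec2P -> | /prec2P ->]; rewrite ?orbT.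
Qed.

Definition code2 (x : X) : rat := dyadic_code prec2 (pos x).

Lemma ler_code2 x y : code2 x <= code2 y <-> le2 x y.
Proof.
rewrite /code2 ler_dyadic_code;
  [| exact: prec2_refl | exact: prec2_trans | exact: prec2_anti | exact: prec2_total].
by rewrite -[in X in _ <-> X](f1K x) -[in X in _ <-> X](f1K y); split => /prec2P.
Qed.

Lemma code2_inj : injective code2.
Proof. by move=> x y E; apply: (lin_anti L2); apply/ler_code2; rewrite E. Qed.

Definition corners (T : K) : option (X * X) :=
  match excluded_middle_informative
          (exists ab : X * X, exists H : corner_pair ab.1 ab.2, T = Kbox H) with
  | left ex => Some (proj1_sig (constructive_indefinite_description _ ex))
  | right _ => None
  end.

Lemma corners_Kbox a b (ab : corner_pair a b) : corners (Kbox ab) = Some (a, b).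
Proof.
rewrite /corners; case: excluded_middle_informative => [ex | no_ex]; last first.
  by case: no_ex; exists (a, b), ab.
case: constructive_indefinite_description => [[a' b'] /= [ab' E]].
by have [-> ->] := box_inj ab' ab (esym (congr1 (@proj1_sig _ _) E)).
Qed.

Lemma corners_empty (T : K) : (forall x, ~ proj1_sig T x) -> corners T = None.
Proof.
move=> T_empty; rewrite /corners; case: excluded_middle_informative => // - [[a b] [ab E]].
by case: (T_empty a); rewrite E; split; [apply: (lin_refl L1) | exact: ab.1].
Qed.

(* The shift by one keeps [code2 b], of level [(pos b).+1 <= (pos a).+1], in
   range and separates the boxes from the empty set. *)
Definition Kcode (T : K) : nat * rat :=
  if corners T is Some (a, b) then ((pos a).+1, code2 b) else (0%N, 0).

Lemma omega_mem_Kcode (T : K) : omega_mem (Kcode T).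
Proof.
case: (KCB_cases T) => [T_empty | [a [b [ab ->]]]].
  by rewrite /Kcode corners_empty //; apply/omega_memP; rewrite mulr0 rpred0.
rewrite /Kcode corners_Kbox; apply: omega_mem_dyadic_code.
by rewrite ltnS -pos_le; exact: ab.2.
Qed.

Definition KCB_to_Omega (T : K) : Omega_eta := exist _ (Kcode T) (omega_mem_Kcode T).

Lemma Kcode_Kbox a b (ab : corner_pair a b) : Kcode (Kbox ab) = ((pos a).+1, code2 b).
Proof. by rewrite /Kcode corners_Kbox. Qed.

Lemma Kcode_empty (T : K) : (forall x, ~ proj1_sig T x) -> Kcode T = (0%N, 0).
Proof. by move=> T_empty; rewrite /Kcode corners_empty. Qed.

Lemma KCB_to_Omega_inj : injective KCB_to_Omega.
Proof.
move=> T U /(congr1 (@proj1_sig _ _)) /=.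
case: (KCB_cases T) => [T_empty | [a [b [ab ->]]]];
  case: (KCB_cases U) => [U_empty | [a' [b' [ab' ->]]]].
- by move=> _; apply: KCB_le_anti => x; [case/T_empty | case/U_empty].
- by rewrite (Kcode_empty T_empty) Kcode_Kbox.
- by rewrite (Kcode_empty U_empty) Kcode_Kbox.
rewrite !Kcode_Kbox => -[pos_eq /code2_inj bb']; subst b'.
have aa' : a = a' by rewrite -(f1K a) -(f1K a') pos_eq.
by subst a'; rewrite (proof_irrelevance _ ab ab').
Qed.

Lemma Kcode_join_empty (T1 T2 T3 : K) :
  (forall x, ~ proj1_sig T1 x) -> is_join (@KCB_le X le1 le2) T1 T2 T3 ->
  Kcode T3 = pair_max (Kcode T1) (Kcode T2).
Proof.
move=> T1_empty T3_join.
have T2_join : is_join (@KCB_le X le1 le2) T1 T2 T2.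
  by apply: is_join_max => //; [move=> x /T1_empty | right].
have [T32 T23] := join_unique T3_join T2_join.
rewrite (KCB_le_anti T32 T23) (Kcode_empty T1_empty) pair_max0 //.
by case/omega_memP: (omega_mem_Kcode T2).
Qed.

Lemma KCB_to_Omega_join (T1 T2 T3 : K) :
  is_join (@KCB_le X le1 le2) T1 T2 T3 ->
  is_join Omega_le (KCB_to_Omega T1) (KCB_to_Omega T2) (KCB_to_Omega T3).
Proof.
move=> T3_join; apply/Omega_joinP => /=.
case: (KCB_cases T1) => [T1_empty | [a1 [b1 [ab1 E1]]]].
  exact: Kcode_join_empty T3_join.
case: (KCB_cases T2) => [T2_empty | [a2 [b2 [ab2 E2]]]].
  by rewrite pair_maxC; apply: Kcode_join_empty (is_joinC T3_join).
subst T1 T2; have [a3 a3_join] := linear_join_exists L1 a1 a2.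
have [b3 b3_join] := linear_join_exists L2 b1 b2.
have ab3 := corner_pair_join ab1 ab2 a3_join b3_join.
have [T3_le le_T3] := join_unique T3_join (Kbox_join ab1 ab2 ab3 a3_join b3_join).
rewrite (KCB_le_anti T3_le le_T3) !Kcode_Kbox /pair_max /=; congr pair.
- rewrite -maxEnat; apply: (homo_join_max L1 (f := fun x => (pos x).+1)) a3_join.
  by move=> x y /pos_le.
- by apply: (homo_join_max L2) b3_join => x y /ler_code2.
Qed.

Lemma exists_low_index N : exists k, (N <= k)%N /\ le2 (f1 k) (g 0).
Proof.
have h_inj : injective (fun t : nat => pos (g (- t%:R))).
  move=> s t E; apply/eqP; rewrite -(eqr_nat rat) -eqr_opp; apply/eqP/g_inj.
  by rewrite -(f1K (g _)) E f1K.
have [t Nt] := inj_nat_unbounded h_inj N.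
exists (pos (g (- t%:R))); split => //; rewrite f1K; apply/g_ord.
by rewrite oppr_le0 ler0n.
Qed.

Definition low_index (N : nat) : nat :=
  proj1_sig (constructive_indefinite_description _ (exists_low_index N)).

Lemma low_indexP N : (N <= low_index N)%N /\ le2 (f1 (low_index N)) (g 0).
Proof. exact: proj2_sig (constructive_indefinite_description _ (exists_low_index N)). Qed.

Definition level_bound (n : nat) : nat := \max_(k < 2 ^ n) pos (g (k%:R / 2%:R ^+ n)).

Lemma pos_g_le_level_bound n r : omega_mem (n, r) -> (pos (g r) <= level_bound n)%N.
Proof.
move=> /omega_memP [r_ge0 r_lt1 /intrP [z r_int]].
have two_n_gt0 : (0 : rat) < 2%:R ^+ n by rewrite exprn_gt0.
have [k Ek] : exists k : nat, 2%:R ^+ n * r = k%:R.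
  exists `|z|%N; rewrite r_int pmulrn gez0_abs // -(ler0z rat) -r_int.
  by rewrite mulr_ge0 // ltW.
have lt_k : (k < 2 ^ n)%N.
  by rewrite -(ltr_nat rat) natrX -Ek -[ltRHS]mulr1 ltr_pM2l.
have -> : r = k%:R / 2%:R ^+ n by rewrite -Ek [2%:R ^+ n * r]mulrC mulfK ?expf_neq0.
exact: (@leq_bigmax _ (fun k : 'I_(2 ^ n) => pos (g (k%:R / 2%:R ^+ n))) (Ordinal lt_k)).
Qed.

Fixpoint anchor (n : nat) : nat :=
  low_index (maxn (level_bound n) (if n is n'.+1 then (anchor n').+1 else 0)).

Lemma anchorP n : (level_bound n <= anchor n)%N /\ le2 (f1 (anchor n)) (g 0).
Proof.
have := low_indexP (maxn (level_bound n) (if n is n'.+1 then (anchor n').+1 else 0)).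
by case: n => [|n] [bound_le below]; split=> //; apply: leq_trans (leq_maxl _ _) bound_le.
Qed.

Lemma anchorS n : (anchor n < anchor n.+1)%N.
Proof. exact: leq_trans (leq_maxr _ _) (low_indexP _).1. Qed.

Lemma anchor_mono : {homo anchor : m n / (m <= n)%N}.
Proof. exact: homo_leq leqnn leq_trans (fun n => ltnW (anchorS n)). Qed.

Lemma anchor_inj : injective anchor.
Proof.
move=> m n E; have anchor_lt := homo_ltn ltn_trans anchorS.
by case: (ltngtP m n) => // [/anchor_lt | /anchor_lt]; rewrite E ltnn.
Qed.

Lemma omega_corner_pair (p : nat * rat) :
  omega_mem p -> corner_pair (f1 (anchor p.1)) (g p.2).
Proof.
case: p => n r p_mem; split => /=.
- apply: (lin_trans L2 (anchorP n).2); apply/g_ord.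
  by case/omega_memP: p_mem.
- apply/pos_le; rewrite posK.
  exact: leq_trans (pos_g_le_level_bound p_mem) (anchorP n).1.
Qed.

Definition Omega_to_KCB (p : Omega_eta) : K := Kbox (omega_corner_pair (proj2_sig p)).

Lemma Omega_to_KCB_inj : injective Omega_to_KCB.
Proof.
move=> p q /(congr1 (@proj1_sig _ _)) /= E.
have [/f1_inj/anchor_inj n_eq /g_inj r_eq] :=
  box_inj (omega_corner_pair (proj2_sig p)) (omega_corner_pair (proj2_sig q)) E.
apply: Omega_eta_ext; move: n_eq r_eq.
by case: (proj1_sig p) (proj1_sig q) => ? ? [? ?] /= -> ->.
Qed.

Lemma Omega_to_KCB_join (p1 p2 p3 : Omega_eta) :
  is_join Omega_le p1 p2 p3 ->
  is_join (@KCB_le X le1 le2) (Omega_to_KCB p1) (Omega_to_KCB p2) (Omega_to_KCB p3).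
Proof.
move=> /Omega_joinP E; apply: Kbox_join; rewrite E /=.
- rewrite -maxEnat; apply: (homo_max_join (f := fun m => f1 (anchor m))) => m n le_mn.
  by apply/f1_ord/anchor_mono; rewrite -leEnat.
- by apply: (homo_max_join (f := g)) => p q /g_ord.
Qed.

End Bichain.

Theorem theorem8p3 :
  forall (X : Type) (le1 le2 : X -> X -> Prop),
    linear_order le1 -> linear_order le2 ->
    order_type_omega le1 ->
    contains_copy_of_Q le2 ->
    join_equimorphic Omega_le (@KCB_le X le1 le2).
Proof.
move=> X le1 le2 L1 L2 [f1 [f1_surj f1_ord]] [g g_ord]; split.
- exists (Omega_to_KCB L1 L2 f1_surj f1_ord g_ord).
  by split; [exact: Omega_to_KCB_inj | exact: Omega_to_KCB_join].
- exists (KCB_to_Omega L1 L2 f1_surj f1_ord).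
  by split; [exact: KCB_to_Omega_inj | exact: KCB_to_Omega_join].
Qed.
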